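(* In the setting of the context, if $\rho$ is expectation bounded (i.e. $\rho(X)\ge\mathbb{E}[-X]$ for all $X\in L$), then $\rho_0=0$. If $\rho$ is strictly expectation bounded (i.e. $\rho(X)>\mathbb{E}[-X]$ for all non-constant $X\in L$), then $\Pi^\rho_0=\{\mathbf{0}\}$.
   Context: Let $(\Omega,\mathcal{F},\mathbb{P})$ be a probability space and a market: riskless asset $S^0_0=1$, $S^0_1=1+r$, $r>-1$; risky assets $S^1,\dots,S^d$ with constants $S^i_0>0$ and real-valued $\mathcal{F}$-measurable $S^i_1$; returns $R^i:=(S^i_1-S^i_0)/S^i_0$. Standing assumptions: nonredundancy (if $\theta\in\mathbb{R}^{1+d}$ with $\sum_{i=0}^d\theta^iS^i_t=0$ a.s. for $t\in\{0,1\}$ then $\theta=0$), $R^i\in L^1$, $\mathbb{E}[R^i]\ne r$ for some $i$. Excess return: $X_\pi:=\pi\cdot(R-r\mathbf{1})$; $\Pi_0:=\{\pi:\mathbb{E}[X_\pi]=0\}$. $L$ is a Riesz space with $L^\infty\subset L\subset L^1$ containing all $X_\pi$; $\rho:L\to(-\infty,\infty]$ is monotone, cash-invariant and positively homogeneous. $\rho_0:=\inf\{\rho(X_\pi):\pi\in\Pi_0\}$; $\Pi^\rho_0$ is the set of $\pi\in\Pi_0$ with $\rho(X_\pi)<\infty$ and $\rho(X_\pi)\le\rho(X_{\pi'})$ for all $\pi'\in\Pi_0$. *)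

From HB Require Import structures.
From mathcomp Require Import all_boot all_order all_algebra.
From mathcomp Require Import all_classical all_reals all_analysis.
Set Implicit Arguments. Unset Strict Implicit. Unset Printing Implicit Defensive.
Import Order.TTheory GRing.Theory Num.Theory.
Local Open Scope classical_set_scope.
Local Open Scope ring_scope.

Section MeanRho.
Context {d : measure_display} {T : measurableType d} {R : realType}
  (P : probability T R).

Definition expect (X : T -> R) : \bar R := (\int[P]_w (X w)%:E)%E.

Definition Linf : set (T -> R) :=
  [set X : T -> R | measurable_fun setT X /\ exists c : R, {ae P, forall w, `|X w| <= c}].

Definition L1 : set (T -> R) := [set X : T -> R | P.-integrable setT (EFin \o X)].

Definition riesz_space (L : set (T -> R)) : Prop :=
  [/\ L (fun _ => 0),
      (forall X Y, L X -> L Y -> L (fun w => X w + Y w)),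
      (forall (a : R) X, L X -> L (fun w => a * X w)) &
      (forall X Y, L X -> L Y -> L (fun w => Num.max (X w) (Y w)))].

Definition ret (n : nat) (S0 : 'I_n -> R) (S1 : 'I_n -> T -> R) (i : 'I_n)
  : T -> R := fun w => (S1 i w - S0 i) / S0 i.

Definition Xpi (n : nat) (S0 : 'I_n -> R) (S1 : 'I_n -> T -> R) (r : R)
  (pi : 'rV[R]_n) : T -> R :=
  fun w => \sum_(i < n) pi 0 i * (ret S0 S1 i w - r).

(* nonredundancy of the market (S^0 = (1, 1+r), S^1..S^n) *)
Definition nonredundant (n : nat) (S0 : 'I_n -> R) (S1 : 'I_n -> T -> R) (r : R)
  : Prop :=
  forall (th0 : R) (th : 'I_n -> R),
    th0 * 1 + \sum_(i < n) th i * S0 i = 0 ->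
    {ae P, forall w, th0 * (1 + r) + \sum_(i < n) th i * S1 i w = 0} ->
    th0 = 0 /\ (forall i, th i = 0).

Definition Pi0 (n : nat) (S0 : 'I_n -> R) (S1 : 'I_n -> T -> R) (r : R)
  : set 'rV[R]_n := [set pi | expect (Xpi S0 S1 r pi) = 0%E].

Definition rho0 (rho : (T -> R) -> \bar R) (n : nat) (S0 : 'I_n -> R)
  (S1 : 'I_n -> T -> R) (r : R) : \bar R :=
  ereal_inf [set rho (Xpi S0 S1 r pi) | pi in Pi0 S0 S1 r].

Definition Pi0rho (rho : (T -> R) -> \bar R) (n : nat) (S0 : 'I_n -> R)
  (S1 : 'I_n -> T -> R) (r : R) : set 'rV[R]_n :=
  [set pi | Pi0 S0 S1 r pi /\ (rho (Xpi S0 S1 r pi) < +oo)%E /\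
            (forall pi', Pi0 S0 S1 r pi' ->
               (rho (Xpi S0 S1 r pi) <= rho (Xpi S0 S1 r pi'))%E)].

Definition monotone_on (L : set (T -> R)) (rho : (T -> R) -> \bar R) : Prop :=
  forall X Y, L X -> L Y -> {ae P, forall w, X w <= Y w} -> (rho Y <= rho X)%E.

Definition cash_invariant_on (L : set (T -> R)) (rho : (T -> R) -> \bar R) : Prop :=
  forall X (c : R), L X -> rho (fun w => X w + c) = (rho X - c%:E)%E.

Definition pos_homogeneous_on (L : set (T -> R)) (rho : (T -> R) -> \bar R) : Prop :=
  rho (fun _ => 0) = 0%E /\
  forall X (l : R), L X -> 0 < l -> rho (fun w => l * X w) = (l%:E * rho X)%E.

Definition expectation_bounded (L : set (T -> R)) (rho : (T -> R) -> \bar R) : Prop :=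
  forall X, L X -> (expect (fun w => (- X w)%R) <= rho X)%E.

Definition as_constant (X : T -> R) : Prop := exists c : R, {ae P, forall w, X w = c}.

Definition strictly_expectation_bounded (L : set (T -> R)) (rho : (T -> R) -> \bar R)
  : Prop :=
  forall X, L X -> ~ as_constant X -> (expect (fun w => (- X w)%R) < rho X)%E.

End MeanRho.

From HB Require Import structures.
From mathcomp Require Import all_boot all_order all_algebra.
From mathcomp Require Import all_classical all_reals all_analysis.
From mathcomp Require Import ring.
Set Implicit Arguments. Unset Strict Implicit. Unset Printing Implicit Defensive.
Import Order.TTheory GRing.Theory Num.Theory.
Local Open Scope classical_set_scope.
Local Open Scope ring_scope.

(* Every excess return [X_pi] with [pi] in [Pi_0] is centred, so expectation
   boundedness gives [rho(X_pi) >= E[-X_pi] = 0], while [pi = 0] attains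
   [rho(X_0) = rho(0) = 0]; hence [rho_0 = 0].  Under strict expectation
   boundedness a minimiser [pi] has [rho(X_pi) <= 0], which forces [X_pi] to be
   a.s. constant, hence a.s. zero since it is centred; nonredundancy of the
   market then turns [X_pi = 0] a.s. into [pi = 0]. *)

Section Expectation.
Context {d : measure_display} {T : measurableType d} {R : realType}
  (P : probability T R).

Lemma expectN (X : T -> R) :
  L1 P X -> expect P (fun w => - X w) = (- expect P X)%E.
Proof.
move=> iX; rewrite /expect.
under eq_integral do rewrite EFinN.
rewrite integralN //; apply: fin_num_adde_defl; rewrite fin_numN.
exact: integrable_neg_fin_num.
Qed.

Lemma expect_ae_cst (X : T -> R) (c : R) :
  L1 P X -> {ae P, forall w, X w = c} -> expect P X = c%:E.
Proof.
move=> iX Xc; rewrite /expect (ae_eq_integral (fun _ => c%:E)).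
- by rewrite integral_cst //= probability_setT mule1.
- exact: measurableT.
- exact: measurable_int iX.
- exact: measurable_cst.
- by apply: filterS Xc => w /= ->.
Qed.

Lemma as_constant_centered (X : T -> R) :
  L1 P X -> expect P X = 0%E -> as_constant P X -> {ae P, forall w, X w = 0}.
Proof.
move=> iX EX0 [c Xc]; have := expect_ae_cst iX Xc.
by rewrite EX0 => -[c0]; rewrite -c0 in Xc.
Qed.

End Expectation.

Section RiskMeasure.
Context {d : measure_display} {T : measurableType d} {R : realType}
  (P : probability T R) (L : set (T -> R)) (rho : (T -> R) -> \bar R).
Hypothesis LL1 : L `<=` L1 P.
Hypothesis L0 : L (fun _ => 0).
Hypothesis mono : monotone_on P L rho.
Hypothesis rho_cst0 : rho (fun _ => 0) = 0%E.

Lemma rho_ae0 (X : T -> R) : L X -> {ae P, forall w, X w = 0} -> rho X = 0%E.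
Proof.
move=> LX X0; rewrite -rho_cst0; apply/eqP; rewrite eq_le.
by rewrite !mono //; apply: filterS X0 => w ->.
Qed.

Lemma expectation_bounded_centered_ge0 (X : T -> R) :
  expectation_bounded P L rho -> L X -> expect P X = 0%E -> (0 <= rho X)%E.
Proof.
move=> EB LX EX0; have := EB _ LX.
by rewrite expectN ?EX0 ?oppe0 //; exact: LL1.
Qed.

Section Strict.
Hypothesis SEB : strictly_expectation_bounded P L rho.

Lemma strictly_expectation_bounded_centered_ge0 (X : T -> R) :
  L X -> expect P X = 0%E -> (0 <= rho X)%E.
Proof.
move=> LX EX0; have LX1 := LL1 LX.
have [Xc|nXc] := pselect (as_constant P X).
  by rewrite rho_ae0 //; exact: as_constant_centered.
by have := SEB LX nXc; rewrite expectN // EX0 oppe0 => /ltW.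
Qed.

Lemma strictly_expectation_bounded_centered_le0 (X : T -> R) :
  L X -> expect P X = 0%E -> (rho X <= 0)%E -> {ae P, forall w, X w = 0}.
Proof.
move=> LX EX0 rhoX_le0; have LX1 := LL1 LX; apply: as_constant_centered => //.
apply: contrapT => nXc; have := SEB LX nXc.
by rewrite expectN // EX0 oppe0 => /lt_le_trans /(_ rhoX_le0); rewrite ltxx.
Qed.

End Strict.
End RiskMeasure.

Section Market.
Context {d : measure_display} {T : measurableType d} {R : realType}
  (P : probability T R) (n : nat) (r : R) (S0 : 'I_n -> R) (S1 : 'I_n -> T -> R).

Lemma Xpi0 : Xpi S0 S1 r 0 = (fun _ => 0).
Proof. by apply/funext => w; rewrite /Xpi big1 // => i _; rewrite mxE mul0r. Qed.

Lemma Pi0_0 : Pi0 P S0 S1 r 0.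
Proof. by rewrite /Pi0 /= Xpi0 /expect integral0. Qed.

(* [X_pi] is the payoff of the self-financing portfolio holding [pi_i / S^i_0]
   units of asset [i] and [-sum_i pi_i] units of the riskless asset. *)
Lemma nonredundant_Xpi_ae0 (pi : 'rV[R]_n) :
  nonredundant P S0 S1 r -> (forall i, S0 i != 0) ->
  {ae P, forall w, Xpi S0 S1 r pi w = 0} -> pi = 0.
Proof.
move=> nonred S0_neq0 Xpi_ae0.
have cost0 : (- \sum_(i < n) pi 0 i) * 1 + \sum_(i < n) (pi 0 i / S0 i) * S0 i = 0.
  rewrite mulr1 [X in _ + X](eq_bigr (fun i => pi 0 i)) ?addNr // => i _.
  exact: divfK.
have payoff0 : {ae P, forall w, (- \sum_(i < n) pi 0 i) * (1 + r) +
    \sum_(i < n) (pi 0 i / S0 i) * S1 i w = 0}.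
  apply: filterS Xpi_ae0 => w Xpi_w0; rewrite -[RHS]Xpi_w0 /Xpi /ret.
  rewrite mulNr big_distrl /= -sumrN -big_split /=; apply: eq_bigr => i _.
  by field.
have [_ th0] := nonred _ _ cost0 payoff0.
apply/rowP => j; have /eqP := th0 j.
by rewrite mxE mulf_eq0 invr_eq0 (negbTE (S0_neq0 j)) orbF => /eqP.
Qed.

End Market.

Theorem corollary3p9
  (d : measure_display) (T : measurableType d) (R : realType)
  (P : probability T R)
  (n : nat) (r : R) (S0 : 'I_n -> R) (S1 : 'I_n -> T -> R)
  (L : set (T -> R)) (rho : (T -> R) -> \bar R) :
  -1 < r ->
  (forall i, 0 < S0 i) ->
  (forall i, measurable_fun setT (S1 i)) ->
  nonredundant P S0 S1 r ->
  (forall i, L1 P (ret S0 S1 i)) ->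
  (exists i, expect P (ret S0 S1 i) <> r%:E) ->
  riesz_space L -> Linf P `<=` L -> L `<=` L1 P ->
  (forall pi, L (Xpi S0 S1 r pi)) ->
  (forall X, L X -> rho X <> -oo%E) ->
  monotone_on P L rho -> cash_invariant_on L rho -> pos_homogeneous_on L rho ->
  (expectation_bounded P L rho -> rho0 P rho S0 S1 r = 0%E) /\
  (strictly_expectation_bounded P L rho -> Pi0rho P rho S0 S1 r = [set 0]).
Proof.
move=> _ S0_gt0 _ nonred _ _ [L0 _ _ _] _ LL1 LX _ mono _ [rho_cst0 _].
have rhoX0 : rho (Xpi S0 S1 r 0) = 0%E by rewrite Xpi0.
split=> [EB|SEB].
  apply/eqP; rewrite eq_le; apply/andP; split.
    by apply: ereal_inf_lbound; exists 0 => //; apply: Pi0_0.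
  apply/ereal_infP => _ [pi Pi0pi <-].
  exact: (expectation_bounded_centered_ge0 LL1).
apply/seteqP; split => pi /=.
  move=> [Pi0pi [_ minpi]]; apply: (nonredundant_Xpi_ae0 nonred).
    by move=> i; rewrite gt_eqF.
  apply: (strictly_expectation_bounded_centered_le0 LL1 SEB) => //.
  by rewrite -rhoX0; apply: minpi; apply: Pi0_0.
move=> ->; split; first exact: Pi0_0.
split; first by rewrite rhoX0 ltry.
move=> pi' Pi0pi'; rewrite rhoX0.
exact: (strictly_expectation_bounded_centered_ge0 LL1 L0 mono rho_cst0 SEB
  (LX pi') Pi0pi').
Qed.
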